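(* Assume the demand is i.i.d. with pmf $P_X$. Let $b\in\mathcal B$ be a constant-distribution policy that is invariant for the initial battery distribution $\theta_1$, with $S_1\sim\theta_1$ independent of $X_1\sim P_X$, $W_1=S_1-X_1$ and $Y_1\sim b(\cdot\mid W_1)$. Then $I(W_1;Y_1)=I(W_1;X_1)$.
   Context: $\mathcal X=\{0,\dots,m_x\}$, $\mathcal Y=\{0,\dots,m_y\}$, $\mathcal S=\{0,\dots,m_s\}$ with $m_x\le m_y$; $\mathcal W=\{s-x\}$; $\mathcal Y_\circ(w)=\{y\in\mathcal Y:w+y\in\mathcal S\}$; $\mathcal B$ the conditional pmfs $b(y\mid w)$ with $b(\mathcal Y_\circ(w)\mid w)=1$. Demand $X_t$ i.i.d. $\sim P_X$ independent of $S_1$. The constant-distribution policy $b$ draws $Y_t\sim b(\cdot\mid W_t)$, $W_t=S_t-X_t$, $S_{t+1}=S_t+Y_t-X_t$. With $\theta_t(s)=P(S_t=s\mid Y^{t-1}=y^{t-1})$ and $\xi_t(w)=P(W_t=w\mid Y^{t-1}=y^{t-1})$, $b$ is invariant for $\theta_1$ if $\theta_t=\theta_1$ and $\xi_t=\xi_1$ for all $t$, where $\xi_1(w)=\sum_{(x,s):s-x=w}P_X(x)\theta_1(s)$. *)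

From HB Require Import structures.
From mathcomp Require Import all_boot all_order all_algebra.
From mathcomp Require Import reals exp.
Set Implicit Arguments. Unset Strict Implicit. Unset Printing Implicit Defensive.
Import Order.TTheory GRing.Theory Num.Theory.
Local Open Scope ring_scope.

Section FinProb.
Variables (R : realType) (Omega : finType) (p : Omega -> R).

Definition Pr (E : pred Omega) : R := \sum_(w | E w) p w.

(* mutual information I(F;G) of random variables F, G defined on Omega,
   as E[ ln ( P(F=f,G=g) / (P(F=f) P(G=g)) ) ]  (natural logarithm;
   outcomes of probability 0 do not contribute). *)
Definition mutinfo (A B : eqType) (F : Omega -> A) (G : Omega -> B) : R :=
  \sum_(w : Omega)
     p w * ln (Pr (fun v => (F v == F w) && (G v == G w))
               / (Pr (fun v => F v == F w) * Pr (fun v => G v == G w))).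
End FinProb.

(* The battery / demand model. X = {0..mx}, Y = {0..my}, S = {0..ms};
   values of W = S - X are integers. *)
Section Model.
Variables (R : realType) (mx my ms : nat).
Variables (PX : 'I_mx.+1 -> R) (theta1 : 'I_ms.+1 -> R) (b : int -> 'I_my.+1 -> R).

Definition is_pmf (T : finType) (q : T -> R) :=
  (forall t, 0 <= q t) /\ \sum_t q t = 1.

Definition inW (w : int) : Prop :=
  exists (s : 'I_ms.+1) (x : 'I_mx.+1), w = (s : nat)%:Z - (x : nat)%:Z.

Definition inYo (w : int) (y : 'I_my.+1) : bool :=
  (0 <= w + (y : nat)%:Z) && (w + (y : nat)%:Z <= (ms : nat)%:Z).

Definition in_B : Prop :=
  forall w, inW w ->
    is_pmf (b w) /\ \sum_(y | inYo w y) b w y = 1.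

(* sample space of the first n steps: (S_1, (X_1..X_n), (Y_1..Y_n)) *)
Definition Omega (n : nat) : finType :=
  ('I_ms.+1 * n.-tuple 'I_mx.+1 * n.-tuple 'I_my.+1)%type.

(* X_{i+1}, Y_{i+1} (0-based index i) as integers *)
Definition Xv n (o : Omega n) (i : nat) : int := (nth ord0 (val o.1.2) i : nat)%:Z.
Definition Yv n (o : Omega n) (i : nat) : int := (nth ord0 (val o.2) i : nat)%:Z.
(* S_{t+1} = S_1 + sum_{i<t} (Y_{i+1} - X_{i+1}), i.e. S_{t+1} = S_t + Y_t - X_t *)
Definition Sv n (o : Omega n) (t : nat) : int :=
  (o.1.1 : nat)%:Z + \sum_(i < t) (Yv o i - Xv o i).
Definition Wv n (o : Omega n) (t : nat) : int := Sv o t - Xv o t.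

(* joint pmf of the first n steps under the constant-distribution policy b:
   S_1 ~ theta1, X_t iid ~ PX independent of S_1, Y_t ~ b(.|W_t) *)
Definition joint n (o : Omega n) : R :=
  theta1 o.1.1 * \prod_(i < n) (PX (tnth o.1.2 i) * b (Wv o i) (tnth o.2 i)).

Definition xi1 (w : int) : R :=
  \sum_(x : 'I_mx.+1) \sum_(s : 'I_ms.+1 | (s : nat)%:Z - (x : nat)%:Z == w)
     PX x * theta1 s.

Definition Ypre n k (yk : k.-tuple 'I_my.+1) (o : Omega n) : bool :=
  [forall i : 'I_k, nth ord0 (val o.2) i == tnth yk i].

(* invariance of b for theta1: for every t = k+1 >= 1 and every y^{t-1} = yk,
   theta_t(.) = P(S_t = . | Y^{t-1} = yk) equals theta1 and
   xi_t(.) = P(W_t = . | Y^{t-1} = yk) equals xi1.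
   Conditional statements are written multiplied out:
   P(S_t = s, Y^{t-1} = yk) = theta1(s) P(Y^{t-1} = yk)  (this is the
   definition of the conditional pmf whenever P(Y^{t-1} = yk) > 0, and is
   vacuous otherwise). *)
Definition invariant_policy : Prop :=
  forall (k : nat) (yk : k.-tuple 'I_my.+1),
    (forall s : 'I_ms.+1,
       Pr (@joint k.+1) (fun o => (Sv o k == (s : nat)%:Z) && Ypre yk o)
       = theta1 s * Pr (@joint k.+1) (Ypre yk)) /\
    (forall w : int,
       Pr (@joint k.+1) (fun o => (Wv o k == w) && Ypre yk o)
       = xi1 w * Pr (@joint k.+1) (Ypre yk)).

End Model.

From HB Require Import structures.
From mathcomp Require Import all_boot all_order all_algebra.
From mathcomp Require Import reals exp ring.
Set Implicit Arguments. Unset Strict Implicit. Unset Printing Implicit Defensive.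
Import Order.TTheory GRing.Theory Num.Theory.
Local Open Scope ring_scope.

(* Both W_1 + X_1 = S_1 and W_1 + Y_1 = S_2 are distributed as theta1, and
   the joint laws factor as P(W = w, X = x) = theta1(w + x) P(X = x) and, by
   invariance of b at time 2, P(W = w, Y = y) = theta1(w + y) P(Y = y).
   Hence both mutual informations equal E[ln theta1(S)] - E[ln P(W = W_1)]
   with S ~ theta1. *)

Section FiniteProbability.
Variables (R : realType) (T : finType) (p : T -> R).

Lemma eq_Pr_supp (E1 E2 : pred T) :
  (forall v, p v != 0 -> E1 v = E2 v) -> Pr p E1 = Pr p E2.
Proof.
move=> E12; rewrite /Pr [LHS]big_mkcond [RHS]big_mkcond; apply: eq_bigr => v _.
by have [->|/E12 ->] := eqVneq (p v) 0; rewrite ?if_same.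
Qed.

Lemma eq_Pr (E1 E2 : pred T) : E1 =1 E2 -> Pr p E1 = Pr p E2.
Proof. exact: eq_bigl. Qed.

Lemma Pr_partition (B : finType) (G : T -> B) (E : pred T) :
  Pr p E = \sum_b Pr p (fun v => E v && (G v == b)).
Proof. by rewrite /Pr (partition_big G predT). Qed.

Lemma Pr_law_of_factor (A B : finType) (H : T -> A) (G : T -> B) (q : A -> R) :
  (forall a b, Pr p (fun v => (H v == a) && (G v == b)) = q a * Pr p (fun v => G v == b)) ->
  forall a, Pr p (fun v => H v == a) = q a * Pr p predT.
Proof.
move=> Hq a; rewrite (Pr_partition G) (Pr_partition G predT) mulr_sumr.
by apply: eq_bigr => b _; exact: Hq.
Qed.

Lemma sum_in_law (A : finType) (H : T -> A) (g : A -> R) :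
  \sum_w p w * g (H w) = \sum_a g a * Pr p (fun v => H v == a).
Proof.
rewrite (partition_big H predT) //; apply: eq_bigr => a _.
by rewrite /Pr mulr_sumr; apply: eq_bigr => w /eqP <-; rewrite mulrC.
Qed.

Hypothesis p_ge0 : forall w, 0 <= p w.

Lemma Pr_ge_mass (E : pred T) w : E w -> p w <= Pr p E.
Proof.
by move=> Ew; rewrite /Pr (bigD1 w) //= lerDl; apply: sumr_ge0 => v _.
Qed.

Lemma mutinfo_factor (A B C : eqType) (F : T -> A) (G : T -> B) (H : T -> C) (q : C -> R) :
  (forall w, p w != 0 ->
     Pr p (fun v => (F v == F w) && (G v == G w)) = q (H w) * Pr p (fun v => G v == G w)) ->
  mutinfo p F G =
  \sum_w p w * ln (q (H w)) - \sum_w p w * ln (Pr p (fun v => F v == F w)).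
Proof.
move=> Hq; rewrite /mutinfo -sumrB; apply: eq_bigr => w _; rewrite -mulrBr.
have [->|pw_neq0] := eqVneq (p w) 0; first by rewrite !mul0r.
have pw_gt0 : 0 < p w by rewrite lt0r pw_neq0 p_ge0.
have Pr_gt0 (E : pred T) : E w -> 0 < Pr p E.
  by move=> Ew; apply: lt_le_trans pw_gt0 (Pr_ge_mass Ew).
have PF_gt0 := Pr_gt0 (fun v => F v == F w) (eqxx _).
have PG_gt0 := Pr_gt0 (fun v => G v == G w) (eqxx _).
have PFG_gt0 : 0 < Pr p (fun v => (F v == F w) && (G v == G w)).
  by apply: Pr_gt0; rewrite !eqxx.
have q_gt0 : 0 < q (H w) by move: PFG_gt0; rewrite Hq // pmulr_lgt0.
rewrite Hq // -ln_div ?posrE //; congr (_ * ln _).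
by field; rewrite !gt_eqF.
Qed.

End FiniteProbability.

Section BatteryModel.
Variables (R : realType) (mx my ms : nat).
Variables (PX : 'I_mx.+1 -> R) (theta1 : 'I_ms.+1 -> R) (b : int -> 'I_my.+1 -> R).
Hypotheses (PX_pmf : is_pmf PX) (theta1_pmf : is_pmf theta1) (b_in_B : in_B mx ms b).
Hypothesis b_invariant : invariant_policy PX theta1 b.

Local Notation Om := (Omega mx my ms).
Local Notation p1 := (@joint R mx my ms PX theta1 b 1).
Local Notation p2 := (@joint R mx my ms PX theta1 b 2).

Definition S1 (o : Om 1) : 'I_ms.+1 := o.1.1.
Definition X1 (o : Om 1) : 'I_mx.+1 := tnth o.1.2 ord0.
Definition Y1 (o : Om 1) : 'I_my.+1 := tnth o.2 ord0.
(* S_2 = W_1 + Y_1; the cast into the state alphabet is faithful only on the support of p1. *)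
Definition S2 (o : Om 1) : 'I_ms.+1 := inord (absz (Wv o 0 + Yv o 0)).

Lemma Xv1E (o : Om 1) : Xv o 0 = (X1 o : nat)%:Z.
Proof. by rewrite /Xv /X1 (tnth_nth ord0). Qed.

Lemma Yv1E (o : Om 1) : Yv o 0 = (Y1 o : nat)%:Z.
Proof. by rewrite /Yv /Y1 (tnth_nth ord0). Qed.

Lemma Wv1E (o : Om 1) : Wv o 0 = (S1 o : nat)%:Z - (X1 o : nat)%:Z.
Proof. by rewrite /Wv /Sv big_ord0 addr0 Xv1E. Qed.

Lemma inW_diff (s : 'I_ms.+1) (x : 'I_mx.+1) : inW mx ms ((s : nat)%:Z - (x : nat)%:Z).
Proof. by exists s, x. Qed.

Lemma inW_Wv1 (o : Om 1) : inW mx ms (Wv o 0).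
Proof. by rewrite Wv1E; apply: inW_diff. Qed.

Lemma b_ge0 w y : inW mx ms w -> 0 <= b w y.
Proof. by move=> /b_in_B [[]]. Qed.

Lemma b_sum1 w : inW mx ms w -> \sum_y b w y = 1.
Proof. by move=> /b_in_B [[]]. Qed.

Lemma inYo_of_b_neq0 w y : inW mx ms w -> b w y != 0 -> inYo ms w y.
Proof.
move=> /b_in_B [[b_nneg b_pmf] b_Yo]; apply: contraNT => y_notin; apply/eqP.
move: b_pmf; rewrite (bigID (inYo ms w)) /= b_Yo => /(canRL (addKr 1)).
by rewrite addNr => /psumr_eq0P -> // i _; apply: b_nneg.
Qed.

Lemma joint1E (o : Om 1) : p1 o = theta1 (S1 o) * (PX (X1 o) * b (Wv o 0) (Y1 o)).
Proof. by rewrite /joint big_ord1. Qed.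

Lemma joint1_ge0 (o : Om 1) : 0 <= p1 o.
Proof.
rewrite joint1E !mulr_ge0 //; [exact: theta1_pmf.1 | exact: PX_pmf.1 | exact/b_ge0/inW_Wv1].
Qed.

Lemma S2E (o : Om 1) : p1 o != 0 -> (S2 o : nat)%:Z = Wv o 0 + Yv o 0.
Proof.
rewrite joint1E !mulf_eq0 => /norP [_ /norP [_ b_neq0]].
have /andP [S2_ge0 S2_le] := inYo_of_b_neq0 (inW_Wv1 o) b_neq0.
by rewrite /S2 Yv1E inordK ?gez0_abs // ltnS -lez_nat gez0_abs.
Qed.

Lemma big_Omega1 (F : Om 1 -> R) :
  \sum_(o : Om 1) F o = \sum_s \sum_x \sum_y F (s, [tuple x], [tuple y]).
Proof.
rewrite pair_bigA pair_bigA /=.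
rewrite (reindex (fun t : 'I_ms.+1 * 'I_mx.+1 * 'I_my.+1 =>
  (t.1.1, [tuple t.1.2], [tuple t.2]) : Om 1)) //.
exists (fun o : Om 1 => (S1 o, X1 o, Y1 o)) => [[[s x] y] //|[[s xt] yt] _].
case: xt => -[|x []] // xt; case: yt => -[|y []] // yt.
by congr (_, _, _); apply: val_inj.
Qed.

Definition extend (o : Om 1) (x : 'I_mx.+1) (y : 'I_my.+1) : Om 2 :=
  (S1 o, [tuple X1 o; x], [tuple Y1 o; y]).

Definition prefix (o : Om 2) : Om 1 :=
  (o.1.1, [tuple tnth o.1.2 ord0], [tuple tnth o.2 ord0]).

Lemma prefix_extend o x y : prefix (extend o x y) = o.
Proof.
case: o => [[s [[|x1 []] // xt]] [[|y1 []] // yt]].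
by congr (_, _, _); apply: val_inj.
Qed.

Lemma big_Omega2 (F : Om 2 -> R) :
  \sum_(o : Om 2) F o = \sum_(o : Om 1) \sum_x \sum_y F (extend o x y).
Proof.
rewrite [RHS](eq_bigr _ (fun o _ => pair_bigA _ _)) pair_bigA /=.
rewrite (reindex (fun t : Om 1 * ('I_mx.+1 * 'I_my.+1) => extend t.1 t.2.1 t.2.2)) //.
exists (fun o : Om 2 => (prefix o, (tnth o.1.2 ord_max, tnth o.2 ord_max))).
  by move=> [o [x y]] _; rewrite /= prefix_extend.
move=> [[s xt] yt] _.
case: xt => -[|x1 [|x2 []]] // xt; case: yt => -[|y1 [|y2 []]] // yt.
by congr (_, _, _); apply: val_inj.
Qed.

Lemma joint2_extend o x y :
  p2 (extend o x y) = p1 o * (PX x * b (Wv o 0 + Yv o 0 - (x : nat)%:Z) y).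
Proof.
have W0 : Wv (extend o x y) 0 = Wv o 0.
  by rewrite /Wv /Sv !big_ord0 /Xv /= /X1 (tnth_nth ord0).
have W1 : Wv (extend o x y) 1 = Wv o 0 + Yv o 0 - (x : nat)%:Z.
  by rewrite /Wv /Sv big_ord1 !big_ord0 /Xv /Yv /= /X1 /Y1 !(tnth_nth ord0) addr0 addrA addrAC.
by rewrite [LHS]/joint big_ord_recr big_ord1 joint1E W0 W1 !mulrA.
Qed.

Lemma sum_joint2_extend (o : Om 1) : \sum_x \sum_y p2 (extend o x y) = p1 o.
Proof.
have [p_eq0|p_neq0] := eqVneq (p1 o) 0.
  by rewrite p_eq0 big1 // => x _; rewrite big1 // => y _; rewrite joint2_extend p_eq0 mul0r.
under eq_bigr => x _ do rewrite (eq_bigr _ (fun y _ => joint2_extend o x y)) -!mulr_sumr.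
rewrite -(S2E p_neq0) -mulr_sumr.
rewrite (eq_bigr PX) ?PX_pmf.2 ?mulr1 // => x _.
by rewrite b_sum1 ?mulr1 //; apply: inW_diff.
Qed.

Lemma Pr_prefix (E : pred (Om 1)) : Pr p2 (fun o => E (prefix o)) = Pr p1 E.
Proof.
rewrite /Pr big_mkcond big_Omega2 [RHS]big_mkcond; apply: eq_bigr => o _.
under eq_bigr do under eq_bigr do rewrite prefix_extend.
case: (E o); first exact: sum_joint2_extend.
by rewrite big1 // => x _; rewrite big1.
Qed.

Lemma Sv_prefix (o : Om 2) : Sv o 1 = Wv (prefix o) 0 + Yv (prefix o) 0.
Proof.
by rewrite Wv1E Yv1E /Sv big_ord1 /Xv /Yv /S1 /X1 /Y1 /= !(tnth_nth ord0) addrA addrAC.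
Qed.

Lemma Ypre_prefix (y : 'I_my.+1) (o : Om 2) : Ypre [tuple y] o = (Y1 (prefix o) == y).
Proof.
have -> : Y1 (prefix o) = tnth o.2 ord0 by [].
rewrite (tnth_nth ord0).
by apply/forallP/idP => [/(_ ord0) //|y_eq i]; rewrite (ord1 i).
Qed.

Lemma Pr_S1_X1 s x : Pr p1 (fun o => (S1 o == s) && (X1 o == x)) = theta1 s * PX x.
Proof.
rewrite /Pr big_mkcond big_Omega1.
under eq_bigr do under eq_bigr do under eq_bigr do rewrite joint1E Wv1E /S1 /X1 /Y1 /= !tnth0.
rewrite (bigD1 s) //= [X in _ + X]big1 ?addr0 => [|s' /negPf s'_ne]; last first.
  by rewrite big1 // => x' _; rewrite big1 // => y' _; rewrite s'_ne.
rewrite (bigD1 x) //= [X in _ + X]big1 ?addr0 => [|x' /negPf x'_ne]; last first.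
  by rewrite big1 // => y' _; rewrite x'_ne andbF.
by rewrite !eqxx /= -!mulr_sumr b_sum1 ?mulr1 //; apply: inW_diff.
Qed.

Lemma Pr_X1 x : Pr p1 (fun o => X1 o == x) = PX x.
Proof.
rewrite (Pr_partition _ S1) (eq_bigr (fun s => theta1 s * PX x)) => [|s _].
  by rewrite -mulr_suml theta1_pmf.2 mul1r.
by rewrite -Pr_S1_X1; apply: eq_Pr => o; rewrite andbC.
Qed.

Lemma Pr_S2_Y1 s y :
  Pr p1 (fun o => (S2 o == s) && (Y1 o == y)) = theta1 s * Pr p1 (fun o => Y1 o == y).
Proof.
have [inv_state _] := b_invariant [tuple y].
transitivity (Pr p1 (fun o => (Wv o 0 + Yv o 0 == (s : nat)%:Z) && (Y1 o == y))).
  by apply: eq_Pr_supp => o p_neq0; rewrite -(S2E p_neq0) eqz_nat.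
rewrite -!Pr_prefix -(eq_Pr _ (Ypre_prefix y)) -inv_state.
by apply: eq_Pr => o; rewrite Ypre_prefix Sv_prefix.
Qed.

Lemma Pr_W1_X1 w :
  Pr p1 (fun v => (Wv v 0 == Wv w 0) && (Xv v 0 == Xv w 0))
  = theta1 (S1 w) * Pr p1 (fun v => Xv v 0 == Xv w 0).
Proof.
have eqX v : (Xv v 0 == Xv w 0) = (X1 v == X1 w) by rewrite !Xv1E eqz_nat.
rewrite (eq_Pr _ eqX) Pr_X1 -Pr_S1_X1; apply: eq_Pr => v; rewrite eqX !Wv1E.
have [->|_] := eqVneq (X1 v) (X1 w); last by rewrite !andbF.
by rewrite !andbT (inj_eq (addIr _)) eqz_nat.
Qed.

Lemma Pr_W1_Y1 w : p1 w != 0 ->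
  Pr p1 (fun v => (Wv v 0 == Wv w 0) && (Yv v 0 == Yv w 0))
  = theta1 (S2 w) * Pr p1 (fun v => Yv v 0 == Yv w 0).
Proof.
move=> pw_neq0.
have eqY v : (Yv v 0 == Yv w 0) = (Y1 v == Y1 w) by rewrite !Yv1E eqz_nat.
rewrite (eq_Pr _ eqY) -Pr_S2_Y1; apply: eq_Pr_supp => v pv_neq0.
have [Y_eq|Y_ne] := eqVneq (Yv v 0) (Yv w 0); last by rewrite -eqY (negbTE Y_ne) !andbF.
rewrite -eqY Y_eq eqxx !andbT -(inj_eq (addIr (Yv w 0))) -{1}Y_eq.
by rewrite -!S2E // eqz_nat.
Qed.

Lemma mutinfo_WY_eq_WX :
  mutinfo p1 (fun o => Wv o 0) (fun o => Yv o 0) = mutinfo p1 (fun o => Wv o 0) (fun o => Xv o 0).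
Proof.
rewrite (mutinfo_factor joint1_ge0 Pr_W1_Y1) (mutinfo_factor joint1_ge0 (fun w _ => Pr_W1_X1 w)).
have law_S1 s : Pr p1 (fun o => S1 o == s) = theta1 s * Pr p1 predT.
  by apply: (Pr_law_of_factor (G := X1)) => {}s x; rewrite Pr_S1_X1 Pr_X1.
congr (_ - _); rewrite (sum_in_law _ S2 (fun s => ln (theta1 s))).
rewrite (sum_in_law _ S1 (fun s => ln (theta1 s))); apply: eq_bigr => s _.
by rewrite (Pr_law_of_factor Pr_S2_Y1) law_S1.
Qed.

End BatteryModel.

Theorem lemma7 (R : realType) (mx my ms : nat)
    (PX : 'I_mx.+1 -> R) (theta1 : 'I_ms.+1 -> R) (b : int -> 'I_my.+1 -> R) :
  (mx <= my)%N ->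
  is_pmf PX -> is_pmf theta1 ->
  in_B mx ms b ->
  invariant_policy PX theta1 b ->
  mutinfo (@joint R mx my ms PX theta1 b 1)
          (fun o => Wv o 0) (fun o => Yv o 0)
  = mutinfo (@joint R mx my ms PX theta1 b 1)
          (fun o => Wv o 0) (fun o => Xv o 0).
Proof. by move=> _; exact: mutinfo_WY_eq_WX. Qed.
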